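(* A metrizable space $X$ satisfies $S_{fin}(\mathcal{K}_{\Omega},\mathcal{K}_{\Omega})$ if and only if $vet(Q_p(X,\mathbb{D}))=\omega$.
   Context: A function $f:X\to Y$ is quasicontinuous if for every $x\in X$, every open $V\ni f(x)$ and every open $U\ni x$ there is a nonempty open $W\subseteq U$ with $f(W)\subseteq V$. $Q_p(X,\mathbb{D})$ is the space of quasicontinuous functions from $X$ to the discrete space $\mathbb{D}=\{0,1\}$ with the topology of pointwise convergence. $\mathcal{K}_\Omega$ is the set of families $\mathcal{U}$ of open subsets of $X$ with $X=\bigcup\{\overline{U}:U\in\mathcal{U}\}$, no element of $\mathcal{U}$ dense in $X$, and for each finite $F\subseteq X$ some $U\in\mathcal{U}$ with $F\subseteq\overline{U}$. $S_{fin}(\mathcal{A},\mathcal{B})$: for every sequence $(A_n)_{n\in\mathbb{N}}$ of elements of $\mathcal{A}$ there are finite $B_n\subseteq A_n$ with $\bigcup_n B_n\in\mathcal{B}$. $vet(Z)=\omega$ means: for every $z\in Z$ and every sequence $(A_n)_{n\in\omega}$ of subsets of $Z$ with $z\in\bigcap_n\overline{A_n}$ there are finite $K_n\subseteq A_n$ with $z\in\overline{\bigcup_n K_n}$. *)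

From HB Require Import structures.
From mathcomp Require Import all_boot all_order all_algebra.
From mathcomp Require Import all_classical all_reals all_analysis.
Set Implicit Arguments. Unset Strict Implicit. Unset Printing Implicit Defensive.
Import Order.TTheory GRing.Theory Num.Theory.
Local Open Scope classical_set_scope.

Definition quasicontinuous (X Y : topologicalType) (f : X -> Y) : Prop :=
  forall (x : X) (V : set Y) (U : set X), open V -> V (f x) -> open U -> U x ->
    exists W : set X, [/\ open W, W !=set0, W `<=` U & f @` W `<=` V].

(* the set of quasicontinuous functions X -> D = {0,1} (bool, discrete),
   as a subset of the space of all functions with the topology of
   pointwise convergence *)
Definition PtwsD (X : topologicalType) : topologicalType := {ptws X -> bool}.

Definition QC_set (X : topologicalType) : set (PtwsD X) :=
  [set f : PtwsD X | quasicontinuous (f : X -> bool)].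

Definition Qp (X : topologicalType) : topologicalType := set_type (@QC_set X).

Definition K_Omega (X : topologicalType) (UU : set (set X)) : Prop :=
  [/\ (forall U, UU U -> open U),
      \bigcup_(U in UU) closure U = [set: X],
      (forall U, UU U -> ~ dense U) &
      (forall F : set X, finite_set F -> exists2 U, UU U & F `<=` closure U)].

Definition S_fin (X : Type) (A B : set (set X) -> Prop) : Prop :=
  forall An : nat -> set (set X), (forall n, A (An n)) ->
    exists Bn : nat -> set (set X),
      (forall n, finite_set (Bn n) /\ Bn n `<=` An n) /\ B (\bigcup_n Bn n).

Definition vet_omega (Z : topologicalType) : Prop :=
  forall (z : Z) (A : nat -> set Z), (forall n, closure (A n) z) ->
    exists K : nat -> set Z,
      (forall n, finite_set (K n) /\ K n `<=` A n) /\ closure (\bigcup_n K n) z.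

(* (<-) Send an open set U to the characteristic function of X \ cl U.  For a
   K_Omega family these functions accumulate at the constant 0, and finitely
   many of them accumulating at 0 come from finitely many sets whose closures
   still cover every finite set.
   (->) Let the quasicontinuous f be in the closure of every A_n.  The set L
   where f is locally constant is open and dense.  For each k, n the open
   non-dense sets V for which some g in A_(n+k) agrees with f on cl V, at the
   points outside L or at distance >= 1/(k+1) from the complement of L, form a
   K_Omega family: near a point of L quasicontinuity of g gives such V, near a
   point outside L density of L does, and in a metric space V can be shrunk so
   that its closure only adds the point itself.  S_fin applied for every k,
   with the witnesses collected along antidiagonals, yields the finite K_n. *)

From HB Require Import structures.
From mathcomp Require Import all_boot all_order all_algebra.
From mathcomp Require Import all_classical all_reals all_analysis.
From mathcomp Require Import lra.
Local Open Scope classical_set_scope.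

Section pointwise_discrete.
Context {X : topologicalType} {Y : discreteUniformType}.

Definition cylinder (f : {ptws X -> Y}) (s : seq X) : set {ptws X -> Y} :=
  [set g : {ptws X -> Y} | {in s, (g : X -> Y) =1 f}].

Lemma cylinder_filter (f : {ptws X -> Y}) : Filter (filter_from setT (cylinder f)).
Proof.
apply: filter_fromT_filter; first by exists [::].
move=> s t; exists (s ++ t) => g gst; split=> x xs; apply: gst;
  by rewrite mem_cat xs ?orbT.
Qed.

Lemma nbhs_cylinder (f : {ptws X -> Y}) (s : seq X) : nbhs f (cylinder f s).
Proof.
elim: s => [|x s IH]; first by apply: filterS filterT => g _ y.
have fx : nbhs f [set g : {ptws X -> Y} | g x = f x].
  exact: (@proj_continuous X (fun=> Y) x f _ (discrete_set1 (f x))).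
apply: filterS (filterI fx IH) => g [gx gs] y.
by rewrite in_cons => /orP[/eqP ->|]; [|exact: gs].
Qed.

Lemma ptws_nbhsE (f : {ptws X -> Y}) : nbhs f = filter_from setT (cylinder f).
Proof.
have cylF := cylinder_filter f.
apply/seteqP; split; last by apply/filter_fromTP => //; exact: nbhs_cylinder.
have : {ptws, filter_from setT (cylinder f) --> f}.
  apply/pointwise_cvgP => x B /nbhs_singleton Bfx.
  by exists [:: x] => // g /(_ x (mem_head _ _)) /= ->.
by move=> cvgf U /cvgf.
Qed.

Lemma closure_ptwsP (A : set {ptws X -> Y}) (f : {ptws X -> Y}) :
  closure A f <-> forall s : seq X, exists2 g, A g & {in s, (g : X -> Y) =1 f}.
Proof.
rewrite /closure /= ptws_nbhsE; split=> [clA s|clA B [s _ sB]].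
  by have [g []] := clA _ (@in_filter_from _ _ setT (cylinder f) s I); exists g.
by have [g Ag sg] := clA s; exists g; split=> //; exact: sB.
Qed.

End pointwise_discrete.

Section initial_topology.
Context {S : choiceType} {T : topologicalType} (f : S -> T).

Lemma initial_nbhsP (x : initial_topology f) (B : set (initial_topology f)) :
  nbhs x B <-> exists2 C, nbhs (f x) C & f @^-1` C `<=` B.
Proof.
split=> [|[C fxC CB]]; last first.
  by apply: filterS CB _; exact: (@initial_continuous _ _ f x C fxC).
rewrite nbhsE => -[W [[V oV VW] Wx] WB].
by rewrite -VW in Wx WB; exists V => //; exists V.
Qed.

Lemma closure_initialE (A : set (initial_topology f)) (x : initial_topology f) :
  closure A x = closure (f @` A) (f x).
Proof.
apply/propext; split=> [clA C /initial_continuous /clA [a [Aa Ca]]|clA B].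
  by exists (f a); split => //; exists a.
by move=> /initial_nbhsP [C /clA [_ [[a Aa <-] Ca]] CB]; exists a; split=> //; exact: CB.
Qed.

End initial_topology.

Lemma closure_QpP (X : topologicalType) (A : set (Qp X)) (z : Qp X) :
  closure A z <-> forall s : seq X, exists2 g, A g & {in s, val g =1 val z}.
Proof.
rewrite (closure_initialE set_val) closure_ptwsP; split=> clA s.
  by have [_ [g Ag <-] sg] := clA s; exists g.
by have [g Ag sg] := clA s; exists (val g) => //; exists g.
Qed.

Lemma closure_bigcup_seq (I : choiceType) (T : topologicalType) (s : seq I)
    (F : I -> set T) :
  closure (\bigcup_(i in [set` s]) F i) = \bigcup_(i in [set` s]) closure (F i).
Proof. by rewrite !bigcup_seq (big_morph closure (@closureU T) (@closure0 T)). Qed.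

Lemma closureI_open {T : topologicalType} {S U : set T} {x : T} :
  closure S x -> open U -> U x -> closure (S `&` U) x.
Proof.
move=> clS oU Ux B Bx.
have [w [Sw [Uw Bw]]] := clS _ (filterI (open_nbhs_nbhs (conj oU Ux)) Bx).
by exists w.
Qed.

Lemma quasicontinuous_cst (X Y : topologicalType) (y : Y) :
  quasicontinuous (fun _ : X => y).
Proof.
move=> x V U _ Vy oU Ux; exists U; split=> //; first by exists x.
by move=> _ [u _ <-].
Qed.

Section quasicontinuous_discrete.
Context {X : topologicalType} {Y : discreteTopologicalType}.

Lemma quasicontinuous_discreteP (f : X -> Y) :
  quasicontinuous f <-> forall x, closure [set y | f y = f x]° x.
Proof.
split=> [qcf x B Bx|clf x V U _ Vfx oU Ux].
  have [W [oW [w Ww] WB fW]] :=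
    qcf x [set f x] B° (discrete_open _) erefl (@open_interior _ _)
      (nbhs_singleton (nbhs_interior Bx)).
  have Wfx : W `<=` [set y | f y = f x]°.
    by rewrite -open_subsetE // => u Wu; apply: fW; exists u.
  by exists w; split; [exact: Wfx | exact: interior_subset (WB _ Ww)].
have [w [fw Uw]] := clf x U (open_nbhs_nbhs (conj oU Ux)).
exists (U `&` [set y | f y = f x]°); split.
- exact/openI/open_interior.
- by exists w.
- by move=> ? [].
- by move=> _ [y [_ /interior_subset /= ->] <-].
Qed.

Definition loc_const (f : X -> Y) : set X := \bigcup_b [set x | f x = b]°.

Lemma open_loc_const (f : X -> Y) : open (loc_const f).
Proof. by apply: bigcup_open => b _; exact: open_interior. Qed.

Lemma loc_constE (f : X -> Y) x : loc_const f x -> [set y | f y = f x]° x.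
Proof. by move=> [b _ fbx]; rewrite (interior_subset fbx). Qed.

Lemma dense_loc_const (f : X -> Y) : quasicontinuous f -> dense (loc_const f).
Proof.
move=> /quasicontinuous_discreteP clf O [x Ox] oO.
have [w [fw Ow]] := clf x O (open_nbhs_nbhs (conj oO Ox)).
by exists w; split=> //; exists (f x).
Qed.

End quasicontinuous_discrete.

Lemma K_Omega_intro (X : topologicalType) (UU : set (set X)) :
  (forall U, UU U -> open U /\ ~ dense U) ->
  (forall F, finite_set F -> exists2 U, UU U & F `<=` closure U) ->
  K_Omega UU.
Proof.
move=> UUo UUfin; split; [by move=> U /UUo[]| |by move=> U /UUo[]|by []].
apply/seteqP; split=> // x _.
by have [U UU_U xU] := UUfin _ (finite_set1 x); exists U => //; exact: xU.
Qed.

Section exterior_indicator.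
Context {X : topologicalType}.

(* Taking the interior makes [chi_ext U] quasicontinuous for every [U], not
   only for open ones. *)
Definition chi_ext (U : set X) : X -> bool := fun x => `[< ~ closure U° x >].

Lemma chi_extF U x : chi_ext U x = false <-> closure U° x.
Proof.
rewrite /chi_ext; split=> [/negbT/asboolPn/contrapT //|clUx].
by apply/asboolPn => /(_ clUx).
Qed.

Lemma quasicontinuous_chi_ext U : quasicontinuous (chi_ext U).
Proof.
apply/quasicontinuous_discreteP => x.
have [clUx|nclUx] := pselect (closure U° x).
  rewrite (chi_extF U x).2 //; apply: closureS clUx.
  rewrite -open_subsetE => [y /subset_closure /chi_extF //|]; exact: open_interior.
have ext_open : open (~` closure U°) by exact/closed_openC/closed_closure.
have ext_sub : ~` closure U° `<=` [set y | chi_ext U y = chi_ext U x]°.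
  by rewrite -open_subsetE // => y ncly /=; rewrite /chi_ext (asboolT nclUx) asboolT.
exact/subset_closure/ext_sub.
Qed.

Definition Qp_chi_ext (U : set X) : Qp X :=
  exist _ (chi_ext U : PtwsD X) (mem_set (quasicontinuous_chi_ext U)).

Definition Qp_false : Qp X :=
  exist _ ((fun=> false) : PtwsD X) (mem_set (@quasicontinuous_cst X bool false)).

End exterior_indicator.

Lemma vet_omega_S_fin (X : topologicalType) :
  vet_omega (Qp X) -> S_fin (@K_Omega X) (@K_Omega X).
Proof.
move=> vet U KU.
pose A n := Qp_chi_ext @` U n.
have clA n : closure (A n) Qp_false.
  apply/closure_QpP => s; have [Uo _ _ Ufin] := KU n.
  have [V UV sV] := Ufin [set` s] (finite_seq s).
  exists (Qp_chi_ext V); first by exists V.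
  by move=> x xs; apply/chi_extF; rewrite ((interior_id V).1 (Uo V UV)); exact: sV.
have [K [Kfin clK]] := vet Qp_false A clA.
have /choice[pre preP] : forall ng : nat * Qp X,
    exists V, A ng.1 ng.2 -> U ng.1 V /\ Qp_chi_ext V = ng.2.
  move=> [n g]; have [[V UV <-]|nAg] := pselect (A n g).
    by exists V => _.
  by exists set0.
exists (fun n => (fun g => pre (n, g)) @` K n); split.
  move=> n; have [Kf KA] := Kfin n; split; first exact: finite_image.
  by move=> _ [g Kg <-]; exact: (preP (n, g) (KA _ Kg)).1.
apply: K_Omega_intro.
  move=> _ [n _ [g Kg <-]]; have [UV _] := preP (n, g) ((Kfin n).2 _ Kg).
  by have [Uo _ Und _] := KU n; split; [exact: Uo | exact: Und].
move=> F /finite_seqP [s ->].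
have [g [n _ Kg] sg] := (closure_QpP _ _ _).1 clK s.
have [_ /= gV] := preP (n, g) ((Kfin n).2 _ Kg).
exists (pre (n, g)); first by exists n => //; exists g.
move=> x xs; apply: (closureS (@interior_subset _ _)); apply/chi_extF.
by move: (sg x xs); rewrite -{1}gV.
Qed.

Import Order.TTheory GRing.Theory Num.Theory.
Local Open Scope ring_scope.

Lemma natSinv_lt_exists {R : realType} {e : R} : 0 < e -> exists k, k.+1%:R^-1 < e.
Proof.
move=> e0; have [k _ ke] := near_infty_natSinv_lt (PosNum e0).
by exists k; apply: (ke k (leqnn k)).
Qed.

Lemma interior_ballxx {R : numDomainType} {X : pseudoMetricType R} (x : X) {r : R} :
  0 < r -> (ball x r)° x.
Proof. by move=> r0; exact: nbhs_singleton (nbhs_interior (nbhsx_ballx x _ r0)). Qed.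

Section hausdorff_pseudometric.
Context {R : realType} {X : pseudoMetricType R}.
Hypothesis hX : hausdorff_space X.

Lemma ball_sep {a b : X} : a != b -> exists2 r : R, 0 < r & ball a r `&` ball b r = set0.
Proof.
move=> ab; move: hX; rewrite ball_hausdorff => /(_ a b ab)[[r1 r2] /= /eqP r12].
exists (Num.min r1%:num r2%:num); first by rewrite lt_min !gt0.
by apply: subsetI_eq0 r12; apply: le_ball; rewrite ge_min lexx ?orbT.
Qed.

Lemma ball_sep_seq {o : X} {s : seq X} : o \notin s ->
  exists2 r : R, 0 < r & forall x, x \in s -> ball x r `&` ball o r = set0.
Proof.
elim: s => [|a s IH]; first by exists 1.
rewrite in_cons negb_or eq_sym => /andP[ao /IH[r r0 rs]].
have [ra ra0 raa] := ball_sep ao.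
exists (Num.min r ra); first by rewrite lt_min r0 ra0.
move=> x; rewrite in_cons => /orP[/eqP->|xs].
  by apply: subsetI_eq0 raa; apply: le_ball; rewrite ge_min lexx orbT.
by apply: subsetI_eq0 (rs x xs); apply: le_ball; rewrite ge_min lexx.
Qed.

Lemma closure_shrinking_balls (x : X) (y : nat -> X) (r : nat -> R) :
  (forall m, 0 < r m <= m.+1%:R^-1) -> (forall m, ball x m.+1%:R^-1 (y m)) ->
  closure (\bigcup_m (ball (y m) (r m / 2))°) `<=` x |` \bigcup_m ball (y m) (r m).
Proof.
move=> r_bd xy p clp; have [->|px] := eqVneq p x; [by left|right].
have [e e0 pex] := ball_sep px.
have [k ke] := natSinv_lt_exists (divr_gt0 e0 (ltr0Sn R 1)).
move: clp; rewrite (bigcup_splitn k) closureU => -[|clT].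
  rewrite (big_morph closure (@closureU X) (@closure0 X)).
  rewrite -(bigcup_mkord k (fun m => closure (ball (y m) (r m / 2))°)).
  move=> [m _ clm]; exists m => //; have /andP[rm0 _] := r_bd m.
  by apply: (subset_closure_half rm0); apply: closureS clm; exact: interior_subset.
have tail_x : \bigcup_i (ball (y (k + i)%N) (r (k + i)%N / 2))° `<=` ball x e.
  move=> w [i _ /interior_subset yw]; have /andP[_ rle] := r_bd (k + i)%N.
  have kik : (k + i)%N.+1%:R^-1 <= k.+1%:R^-1 :> R.
    by rewrite lef_pV2 ?posrE ?ltr0Sn // ler_nat ltnS leq_addr.
  have halves (a b c : R) : c <= a -> a <= b -> b < e / 2 -> a + c / 2 <= e.
    by move=> *; lra.
  apply: le_ball (ball_triangle (xy _) yw); exact: halves rle kik ke.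
have [w [xw pw]] := closureS tail_x clT (nbhsx_ballx p _ e0).
by have : (ball p e `&` ball x e) w by []; rewrite pex.
Qed.

Lemma open_closure_subsetU1 {S : set X} {x : X} : open S -> closure S x ->
  exists V : set X, [/\ open V, closure V x & closure V `<=` x |` S].
Proof.
move=> oS clSx.
have m0 m : 0 < m.+1%:R^-1 :> R by rewrite invr_gt0 ltr0Sn.
have /choice[y yP] m : exists y, S y /\ ball x m.+1%:R^-1 y.
  by have [y []] := clSx _ (nbhsx_ballx x _ (m0 m)); exists y.
have /choice[r rP] m : exists r, 0 < r <= m.+1%:R^-1 /\ ball (y m) r `<=` S.
  have /nbhs_ballP[e e0 eS] := open_nbhs_nbhs (conj oS (yP m).1).
  exists (Num.min e m.+1%:R^-1); rewrite lt_min e0 m0 ge_min lexx orbT; split=> //.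
  by apply: subset_trans eS; apply: le_ball; rewrite ge_min lexx.
exists (\bigcup_m (ball (y m) (r m / 2))°); split.
- by apply: bigcup_open => m _; exact: open_interior.
- move=> C /nbhs_ballP[e e0 eC]; have [k ke] := natSinv_lt_exists e0.
  have /andP[rk0 _] := (rP k).1.
  exists (y k); split; last exact/eC/(le_ball (ltW ke))/(yP k).2.
  by exists k => //; apply: interior_ballxx; rewrite divr_gt0.
move=> p /(closure_shrinking_balls x y r (fun m => (rP m).1) (fun m => (yP m).2)).
by move=> [->|[m _ ymp]]; [left|right; exact: (rP m).2].
Qed.

End hausdorff_pseudometric.

Lemma antidiagonal_selection {T : Type} (A : nat -> set T) (B : nat -> nat -> set T) :
  (forall k n, finite_set (B k n) /\ B k n `<=` A (n + k)%N) ->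
  exists K : nat -> set T, (forall m, finite_set (K m) /\ K m `<=` A m) /\
    \bigcup_k \bigcup_n B k n `<=` \bigcup_m K m.
Proof.
move=> BA; exists (fun m => \bigcup_(k in `I_m.+1) B k (m - k)%N); split.
  move=> m; split.
    by apply: bigcup_finite => [|k _]; [exact: finite_II|exact: (BA _ _).1].
  by move=> t [k /= km /(BA _ _).2]; rewrite subnK // -ltnS.
move=> t [k _ [n _ Bt]]; exists (n + k)%N => //.
by exists k; rewrite /= ?addnK // ltnS leq_addl.
Qed.

Section deep_points.
Context {R : realType} {X : pseudoMetricType R} (f : X -> bool).
Hypothesis qcf : quasicontinuous f.

(* Agreement with [f] will only be demanded at [k]-deep points, so that next
   to a point where [f] is not locally constant the nearby points of
   [loc_const f] can be ignored. *)
Definition deep (k : nat) : set X :=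
  [set x | loc_const f x -> ball x k.+1%:R^-1 `<=` loc_const f].

Lemma deep_mono (k k' : nat) : (k <= k')%N -> deep k `<=` deep k'.
Proof.
move=> kk' x dx /dx; apply: subset_trans; apply: le_ball.
by rewrite lef_pV2 ?posrE ?ltr0Sn // ler_nat ltnS.
Qed.

Lemma deep_exhaust (s : seq X) : exists k, [set` s] `<=` deep k.
Proof.
elim: s => [|a s [k sk]]; first by exists 0%N.
have [ka aka] : exists ka, deep ka a.
  have [La|NLa] := pselect (loc_const f a); last by exists 0%N.
  have /nbhs_ballP[e e0 eL] := open_nbhs_nbhs (conj (open_loc_const f) La).
  have [ka kae] := natSinv_lt_exists e0.
  by exists ka => _; apply: subset_trans eL; exact/le_ball/ltW.
exists (maxn k ka) => x /=; rewrite in_cons => /orP[/eqP->|xs].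
  by apply: deep_mono aka; exact: leq_maxr.
by apply: deep_mono (sk x xs); exact: leq_maxl.
Qed.

Lemma agree_open (g : X -> bool) (k : nat) (x : X) :
  quasicontinuous g -> g x = f x ->
  exists S, [/\ open S, closure S x & S `&` deep k `<=` [set y | g y = f y]].
Proof.
move=> /quasicontinuous_discreteP clg gx.
have [Lx|NLx] := pselect (loc_const f x).
  exists ([set y | g y = f x]° `&` [set y | f y = f x]°); split.
  - exact/openI/open_interior/open_interior.
  - apply: closureI_open; [by rewrite -gx; exact: clg|exact: open_interior|].
    exact: loc_constE.
  - by move=> y [[/interior_subset /= -> /interior_subset /= ->]].
exists ((ball x k.+1%:R^-1)° `&` loc_const f); split.
- exact/openI/open_loc_const/open_interior.
- move=> C Cx; have k0 : 0 < k.+1%:R^-1 :> R by rewrite invr_gt0 ltr0Sn.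
  have O0 : C° `&` (ball x k.+1%:R^-1)° !=set0.
    by exists x; split; [exact: nbhs_singleton (nbhs_interior Cx)|exact: interior_ballxx].
  have [w [[Cw bw] Lw]] :=
    dense_loc_const f qcf _ O0 (openI (@open_interior _ _) (@open_interior _ _)).
  by exists w; split; [split|exact: interior_subset].
- move=> y [[/interior_subset xy Ly] dy]; exfalso; apply: NLx.
  exact/(dy Ly)/ball_sym.
Qed.

End deep_points.

Section agreeing_opens.
Context {R : realType} {X : pseudoMetricType R}.
Hypothesis hX : hausdorff_space X.
Variables (z : Qp X) (A : nat -> set (Qp X)).
Hypotheses (clA : forall n, closure (A n) z) (zNA : forall n, ~ A n z).

Definition agreeing_opens (k n : nat) : set (set X) :=
  [set V | [/\ open V, ~ dense V & exists2 g, A (n + k)%N g &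
    closure V `&` deep (val z) k `<=` [set x | val g x = val z x]]].

Lemma agree_open_ball (g : Qp X) (k : nat) (x : X) (rho : R) :
  val g x = val z x -> 0 < rho ->
  exists V, [/\ open V, closure V x, V `<=` ball x rho &
    closure V `&` deep (val z) k `<=` [set y | val g y = val z y]].
Proof.
move=> gx rho0.
have [S [oS clSx Sgz]] := agree_open _ (set_valP z) _ k _ (set_valP g) gx.
have [V [oV clVx clVS]] := open_closure_subsetU1 hX (openI oS (@open_interior _ _))
  (closureI_open clSx (@open_interior _ _) (interior_ballxx x rho0)).
exists V; split=> //.
  by move=> y /subset_closure /clVS [->|[_ /interior_subset]] //; exact: ballxx.
by move=> y [/clVS [->|[Sy _]] dy] //=; exact: Sgz.
Qed.

Lemma agreeing_opens_finite_cover (k n : nat) (s : seq X) :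
  exists2 V, agreeing_opens k n V & [set` s] `<=` closure V.
Proof.
have [g Ag sg] := (closure_QpP _ _ _).1 (clA (n + k)%N) s.
have [q qs] : exists q, q \notin s.
  apply: contrapT => /forallNP sX; apply: (zNA (n + k)%N); suff <- : g = z by [].
  by apply/val_inj/funext => x; apply: sg; apply/negPn/negP; exact: sX.
have [rho rho0 rhos] := ball_sep_seq hX qs.
have /choice[Vx VxP] : forall x, exists V, x \in s -> [/\ open V, closure V x,
    V `<=` ball x rho & closure V `&` deep (val z) k `<=` [set y | val g y = val z y]].
  move=> x; have [xs|_] := boolP (x \in s); last by exists set0.
  by have [V] := agree_open_ball g k x rho (sg x xs) rho0; exists V.
exists (\bigcup_(x in [set` s]) Vx x); last first.
  by move=> x xs; have [_ clx _ _] := VxP x xs; apply: closureS clx; exact: bigcup_sup.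
split.
- by apply: bigcup_open => x xs; have [] := VxP x xs.
- move=> dV.
  have [y [qy [x xs Vy]]] :=
    dV _ (ex_intro _ q (interior_ballxx q rho0)) (@open_interior _ _).
  have [_ _ Vb _] := VxP x xs.
  have : (ball x rho `&` ball q rho) y := conj (Vb _ Vy) (interior_subset qy).
  by rewrite rhos.
- exists g => // y []; rewrite closure_bigcup_seq => -[x xs clVy] dy.
  by have [_ _ _ ] := VxP x xs; apply; split.
Qed.

Lemma K_Omega_agreeing_opens (k n : nat) : K_Omega (agreeing_opens k n).
Proof.
apply: K_Omega_intro => [V [oV nV _] //|F /finite_seqP[s ->]].
exact: agreeing_opens_finite_cover.
Qed.

End agreeing_opens.

Lemma S_fin_vet_omega {R : realType} {X : pseudoMetricType R} :
  hausdorff_space X -> S_fin (@K_Omega X) (@K_Omega X) -> vet_omega (Qp X).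
Proof.
move=> hX Sfin z A clA.
have [[n Anz]|/forallNP zNA] := pselect (exists n, A n z).
  exists (fun m => A m `&` [set z]); split.
    by move=> m; split; [exact/finite_setIr/finite_set1|exact: subIsetl].
  by apply: subset_closure; exists n.
have /choice[B BP] := fun k =>
  Sfin (agreeing_opens z A k) (K_Omega_agreeing_opens hX z A clA zNA k).
have /choice[w wP] : forall knV : nat * nat * set X, exists g,
    agreeing_opens z A knV.1.1 knV.1.2 knV.2 -> A (knV.1.2 + knV.1.1)%N g /\
      closure knV.2 `&` deep (val z) knV.1.1 `<=` [set x | val g x = val z x].
  move=> [[k n] V]; have [[_ _ [g Ag gV]]|nV] := pselect (agreeing_opens z A k n V).
    by exists g => _.
  by exists z => /nV.
have [|K [KA BK]] :=
    antidiagonal_selection A (fun k n => (fun V => w (k, n, V)) @` B k n).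
  move=> k n; have [Bf BF] := (BP k).1 n; split; first exact: finite_image.
  by move=> _ [V BV <-]; exact: (wP (k, n, V) (BF _ BV)).1.
exists K; split=> //; apply: closureS BK _ _; apply/closure_QpP => s.
have [k sk] := deep_exhaust (val z) s.
have [_ [_ _ _ Bcover]] := BP k.
have [V [n _ BV] sV] := Bcover _ (finite_seq s).
have [_ wV] := wP (k, n, V) (((BP k).1 n).2 _ BV).
exists (w (k, n, V)); first by exists k => //; exists n => //; exists V.
by move=> x xs; apply: wV; split; [exact: sV|exact: sk].
Qed.

Local Close Scope ring_scope.

Theorem corollary4p4 (R : realType) (X : pseudoMetricType R)
    (hX : hausdorff_space X) :
  S_fin (@K_Omega X) (@K_Omega X) <-> vet_omega (Qp X).
Proof. by split; [exact: S_fin_vet_omega | exact: vet_omega_S_fin]. Qed.
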